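(* Let $\kappa$ be a regular uncountable cardinal with $\kappa^{<\kappa}=\kappa$ and $\gamma^\omega<\kappa$ for all $\gamma<\kappa$. There is a $\kappa$-representation $\langle I^0_\alpha\mid\alpha<\kappa\rangle$ of $I^0$ such that for every limit ordinal $\delta<\kappa$ and every $\nu\in I^0$ with $\nu\notin I^0_\delta$ there is $\beta<\delta$ satisfying: for every $\sigma\in I^0_\delta$ with $\sigma>\nu$ there is $\sigma'\in I^0_\beta$ with $\sigma>\sigma'>\nu$.
   Context: Let $\mathbb Q$ be the rationals and order $\kappa\times\mathbb Q$ lexicographically. $I^0$ is the set of functions $f:\omega\to\kappa\times\mathbb Q$, written $f(n)=(f_1(n),f_2(n))$, such that $\{n<\omega\mid f_1(n)\ne0\}$ is finite, ordered by $f<g$ iff $f(n)<g(n)$ for the least $n$ with $f(n)\ne g(n)$. A $\kappa$-representation of a set $A$ of size $\le\kappa$ is an increasing continuous sequence of subsets of $A$, each of size $<\kappa$, whose union is $A$. *)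

From mathcomp Require Import all_boot all_order all_algebra.
Set Implicit Arguments. Unset Strict Implicit. Unset Printing Implicit Defensive.
Import Order.TTheory GRing.Theory Num.Theory.

Definition well_order (K : Type) (lt : K -> K -> Prop) : Prop :=
  well_founded lt /\ (forall x y z, lt x y -> lt y z -> lt x z) /\
  (forall x y, lt x y \/ x = y \/ lt y x).

(* The initial segment {beta | beta < alpha}, i.e. the ordinal alpha. *)
Definition seg (K : Type) (lt : K -> K -> Prop) (a : K) : Type := {b : K | lt b a}.

Definition injective_fun (X Y : Type) (f : X -> Y) : Prop :=
  forall x y, f x = f y -> x = y.

Definition inj_into (X Y : Type) : Prop := exists f : X -> Y, injective_fun f.

(* |X| < kappa, where kappa is the order type of (K, lt), assumed a cardinal:
   X injects into some ordinal alpha < kappa. *)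
Definition card_lt (K : Type) (lt : K -> K -> Prop) (X : Type) : Prop :=
  exists a : K, inj_into X (seg lt a).

Definition regular_uncountable_cardinal (K : Type) (lt : K -> K -> Prop) : Prop :=
  well_order lt /\
  (* kappa is a cardinal: no alpha < kappa has cardinality kappa *)
  (forall a : K, ~ inj_into K (seg lt a)) /\
  ~ inj_into K nat /\
  (* regular: every subset of size < kappa is bounded *)
  (forall S : K -> Prop, card_lt lt {b : K | S b} ->
      exists a : K, forall b, S b -> lt b a).

(* kappa^{<kappa} = kappa : for each gamma < kappa, |kappa^gamma| <= kappa. *)
Definition kappa_lt_kappa (K : Type) (lt : K -> K -> Prop) : Prop :=
  forall a : K, inj_into (seg lt a -> K) K.

Definition omega_powers_small (K : Type) (lt : K -> K -> Prop) : Prop :=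
  forall a : K, card_lt lt (nat -> seg lt a).

Definition is_zero (K : Type) (lt : K -> K -> Prop) (x : K) : Prop :=
  forall y, ~ lt y x.

Definition lexlt (K : Type) (lt : K -> K -> Prop) (p q : K * rat) : Prop :=
  lt p.1 q.1 \/ (p.1 = q.1 /\ (p.2 < q.2)%R).

(* I^0: functions f : omega -> kappa x Q with f_1(n) <> 0 for finitely many n. *)
Definition I0 (K : Type) (lt : K -> K -> Prop) : Type :=
  {f : nat -> K * rat | exists N : nat, forall n, (N <= n)%N -> is_zero lt (f n).1}.

Definition I0lt (K : Type) (lt : K -> K -> Prop) (f g : I0 lt) : Prop :=
  exists n : nat, (forall m, (m < n)%N -> proj1_sig f m = proj1_sig g m) /\
                  lexlt lt (proj1_sig f n) (proj1_sig g n).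

Definition is_limit (K : Type) (lt : K -> K -> Prop) (d : K) : Prop :=
  (exists b, lt b d) /\ (forall b, lt b d -> exists c, lt b c /\ lt c d).

Definition kappa_representation (K : Type) (lt : K -> K -> Prop) (A : Type)
    (I : K -> A -> Prop) : Prop :=
  (forall a b, lt a b -> forall x, I a x -> I b x) /\
  (forall d, is_limit lt d -> forall x, I d x -> exists a, lt a d /\ I a x) /\
  (forall a, card_lt lt {x : A | I a x}) /\
  (forall x : A, exists a, I a x).

From mathcomp Require Import all_boot all_order all_algebra.
From mathcomp Require Import lra.
From Stdlib Require Import Classical ProofIrrelevance FunctionalExtensionality Wf_nat.
Set Implicit Arguments. Unset Strict Implicit.

(** Take for [I^0_alpha] the sequences all of whose first coordinates are
    below [alpha].  It injects into [(alpha x Q)^omega], so it is small by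
    [gamma^omega < kappa]; the first coordinates of a sequence take finitely
    many values, which gives continuity at limits and covering.  If [nu] is
    not in [I^0_delta], let [n0] be least with [nu(n0)_1 >= delta] and let
    [beta < delta] bound the [nu(k)_1], [k < n0].  Any [sigma > nu] in
    [I^0_delta] first differs from [nu] at some [m < n0]; copying [nu] below
    [m], putting [(nu(m)_1, q)] at [m] for a rational [q] chosen in between,
    and zeros afterwards gives an element of [I^0_beta] strictly between [nu]
    and [sigma]. *)

Section WellOrder.

Variables (K : Type) (lt : K -> K -> Prop).

Hypothesis lt_wo : well_order lt.

Lemma wo_irrefl x : ~ lt x x.
Proof. by case: lt_wo => W _; elim: (W x) => y _ IH yy; exact: (IH y yy) yy. Qed.

Lemma wo_trans x y z : lt x y -> lt y z -> lt x z.
Proof. by case: lt_wo => _ [Tr _]; apply: Tr. Qed.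

Lemma wo_total x y : lt x y \/ x = y \/ lt y x.
Proof. by case: lt_wo => _ [_ T]; apply: T. Qed.

Lemma is_zero_unique x y : is_zero lt x -> is_zero lt y -> x = y.
Proof. by move=> zx zy; case: (wo_total x y) => [/zy|[|/zx]]. Qed.

Lemma is_zero_lt z b d : is_zero lt z -> lt b d -> lt z d.
Proof.
by move=> zz bd; case: (wo_total z b) => [zb|[->|/zz//]] //; apply: wo_trans zb bd.
Qed.

Lemma exists_max2 x y :
  exists M, (M = x \/ M = y) /\ forall c, lt M c -> lt x c /\ lt y c.
Proof.
case: (wo_total x y) => [xy|[<-|yx]].
- by exists y; split; [right | move=> c yc; split; first apply: wo_trans xy yc].
- by exists x; split; [left|].
- by exists x; split; [left | move=> c xc; split; last apply: wo_trans yx xc].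
Qed.

Definition has_no_max (P : K -> Prop) : Prop :=
  forall x, P x -> exists c, lt x c /\ P c.

Lemma finite_bound_in (P : K -> Prop) : has_no_max P ->
  forall (g : nat -> K) n, (forall k, (k <= n)%N -> P (g k)) ->
  exists b, P b /\ forall k, (k <= n)%N -> lt (g k) b.
Proof.
move=> HP g; elim=> [|n IH] Pg.
  have [c [g0c Pc]] := HP _ (Pg 0%N (leqnn 0)).
  by exists c; split => // k; rewrite leqn0 => /eqP ->.
have [b [Pb gb]] := IH (fun k kn => Pg k (leqW kn)).
have [M [MP Mc]] := exists_max2 b (g n.+1).
have [c [Mlt Pc]] : exists c, lt M c /\ P c.
  by apply: HP; case: MP => ->; [|apply: Pg].
have [bc gc] := Mc c Mlt.
exists c; split => // k; rewrite leq_eqVlt => /orP [/eqP -> // | kn].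
exact: wo_trans (gb k kn) bc.
Qed.

Definition I0_below (a : K) (f : I0 lt) : Prop := forall n, lt (proj1_sig f n).1 a.

Lemma I0_bound_in (P : K -> Prop) (f : I0 lt) : has_no_max P ->
  (forall n, P (proj1_sig f n).1) -> exists b, P b /\ I0_below b f.
Proof.
case: f => f [N HN] HP /= Pf.
have [b [Pb fb]] := finite_bound_in (g := fun k => (f k).1) (n := N) HP (fun k _ => Pf k).
exists b; split => // n /=; case: (leqP n N) => [|Nn]; first exact: fb.
by rewrite (is_zero_unique (HN n (ltnW Nn)) (HN N (leqnn N))); apply: fb.
Qed.

Lemma lexlt_interpolate (p s : K * rat) :
  lexlt lt p s -> exists q, lexlt lt p (p.1, q) /\ lexlt lt (p.1, q) s.
Proof.
case=> [ps | [ps qs]].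
  by exists (p.2 + 1)%R; split; [right; split=> //=; lra | left].
by exists ((p.2 + s.2) / 2)%R; split; right; split=> //=; lra.
Qed.

Definition graft (f : nat -> K * rat) (m : nat) (r : K * rat) (z : K) (k : nat) :=
  if (k < m)%N then f k else if k == m then r else (z, 0%R).

Lemma I0lt_interpolate (b z : K) (nu sigma : I0 lt) (m : nat) :
  is_zero lt z -> lt z b -> (forall k, (k <= m)%N -> lt (proj1_sig nu k).1 b) ->
  (forall k, (k < m)%N -> proj1_sig nu k = proj1_sig sigma k) ->
  lexlt lt (proj1_sig nu m) (proj1_sig sigma m) ->
  exists sigma', I0_below b sigma' /\ I0lt sigma' sigma /\ I0lt nu sigma'.
Proof.
move=> zz zb nub agree /lexlt_interpolate [q [nuq qsigma]].
set g := graft (proj1_sig nu) m ((proj1_sig nu m).1, q) z.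
have g_lt k : (k < m)%N -> g k = proj1_sig nu k by rewrite /g /graft => ->.
have g_m : g m = ((proj1_sig nu m).1, q) by rewrite /g /graft ltnn eqxx.
have g_gt k : (m < k)%N -> g k = (z, 0%R).
  by move=> mk; rewrite /g /graft ltnNge (ltnW mk) (gtn_eqF mk).
have gI0 : exists N, forall n, (N <= n)%N -> is_zero lt (g n).1.
  by exists m.+1 => n mn; rewrite g_gt.
exists (exist _ g gI0); split; [|split].
- move=> n /=; case: (ltngtP n m) => [nm|mn|->].
  + by rewrite g_lt //; apply: nub; apply: ltnW.
  + by rewrite g_gt.
  + by rewrite g_m; apply: nub.
- by exists m; split=> [k km|] /=; rewrite ?g_m // g_lt // agree.
- by exists m; split=> [k km|] /=; rewrite ?g_m // g_lt.
Qed.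

Lemma least_escape d (nu : I0 lt) : ~ I0_below d nu ->
  exists n0, ~ lt (proj1_sig nu n0).1 d /\
             forall k, (k < n0)%N -> lt (proj1_sig nu k).1 d.
Proof.
move=> nu_out.
have [n esc] : exists n, ~ lt (proj1_sig nu n).1 d.
  by apply: NNPP => none; apply: nu_out => n; apply: NNPP => esc; apply: none; exists n.
have [n0 [[esc0 least] _]] := dec_inh_nat_subset_has_unique_least_element
  (fun n => ~ lt (proj1_sig nu n).1 d) (fun n => classic _) (ex_intro _ n esc).
exists n0; split=> // k kn0; apply: NNPP => esck.
by have /leP := least k esck; rewrite leqNgt kn0.
Qed.

Lemma I0lt_diff_before_escape d (nu sigma : I0 lt) m n0 :
  I0_below d sigma -> ~ lt (proj1_sig nu n0).1 d ->
  (forall k, (k < m)%N -> proj1_sig nu k = proj1_sig sigma k) ->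
  lexlt lt (proj1_sig nu m) (proj1_sig sigma m) -> (m < n0)%N.
Proof.
move=> sigma_in esc agree diff; case: ltngtP => // [n0m | mn0].
  by case: esc; rewrite agree.
case: esc; rewrite -mn0; case: diff => [nus | [-> _]] //.
exact: wo_trans nus (sigma_in m).
Qed.

Lemma I0_below_approximation d (nu : I0 lt) : is_limit lt d -> ~ I0_below d nu ->
  exists b, lt b d /\
    forall sigma, I0_below d sigma -> I0lt nu sigma ->
    exists sigma', I0_below b sigma' /\ I0lt sigma' sigma /\ I0lt nu sigma'.
Proof.
move=> [[b0 b0d] d_lim] nu_out.
have [n0 [esc below]] := least_escape nu_out.
have [z zz] : exists z, is_zero lt z.
  by case: (proj2_sig nu) => N HN; exists (proj1_sig nu N).1; apply: HN.
have escape_free : forall k, (k <= n0)%N ->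
    lt (if (k < n0)%N then (proj1_sig nu k).1 else z) d.
  by move=> k _; case: ifP => [/below|_] //; apply: is_zero_lt zz b0d.
have [b [bd nub]] := finite_bound_in d_lim escape_free.
exists b; split=> // sigma sigma_in [m [agree diff]].
have mn0 := I0lt_diff_before_escape sigma_in esc agree diff.
apply: (I0lt_interpolate zz _ _ agree diff).
- by have := nub n0 (leqnn n0); rewrite ltnn.
- move=> k km; have kn0 := leq_ltn_trans km mn0.
  by have := nub k (ltnW kn0); rewrite kn0.
Qed.

End WellOrder.

Lemma proj1_sig_inj (A : Type) (P : A -> Prop) (u v : sig P) :
  proj1_sig u = proj1_sig v -> u = v.
Proof. exact: eq_sig_hprop (fun _ => proof_irrelevance _) u v. Qed.

Lemma inj_into_trans (X Y Z : Type) : inj_into X Y -> inj_into Y Z -> inj_into X Z.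
Proof. by move=> [f f_inj] [g g_inj]; exists (fun x => g (f x)) => x y /g_inj /f_inj. Qed.

Lemma card_lt_inj (K : Type) (lt : K -> K -> Prop) (X Y : Type) :
  inj_into X Y -> card_lt lt Y -> card_lt lt X.
Proof. by move=> XY [a Ya]; exists a; apply: inj_into_trans XY Ya. Qed.

Lemma inj_into_natfun (X Y : Type) : inj_into X Y -> inj_into (nat -> X) (nat -> Y).
Proof.
move=> [f f_inj]; exists (fun u n => f (u n)) => u v fuv.
by apply: functional_extensionality => n; apply: f_inj; apply: (f_equal (fun w => w n) fuv).
Qed.

Lemma inj_into_natfun_uncurry (X : Type) : X -> inj_into (nat -> nat -> X) (nat -> X).
Proof.
move=> x0; exists (fun F j => if unpickle j is Some (n, i) then F n i else x0).
move=> F G FG; apply: functional_extensionality => n.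
apply: functional_extensionality => i.
by have := f_equal (fun H => H (pickle (n, i))) FG; rewrite /= pickleK.
Qed.

Section Kappa.

Variables (K : Type) (lt : K -> K -> Prop).
Hypothesis Hkappa : regular_uncountable_cardinal lt.
Hypothesis Homega : omega_powers_small lt.

Let lt_wo : well_order lt := proj1 Hkappa.

Lemma exists_lt_pair : exists b c, lt b c.
Proof.
have [x [y xy]] : exists x y : K, x <> y.
  apply: NNPP => none; case: Hkappa => _ [_ [K_uncountable _]]; apply: K_uncountable.
  by exists (fun _ => 0%N) => x y _; apply: NNPP => xy; apply: none; exists x, y.
case: (wo_total lt_wo x y) => [xy'|[//|yx]]; first by exists x, y.
by exists y, x.
Qed.

Lemma lt_unbounded a : exists c, lt a c.
Proof.
have [b [c bc]] := exists_lt_pair.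
have singleton_small : card_lt lt {x : K | x = a}.
  exists c, (fun _ => exist _ b bc) => u v _; apply: proj1_sig_inj.
  by rewrite (proj2_sig u) (proj2_sig v).
case: Hkappa => _ [_ [_ regular]].
have [a' a'_above] := regular _ singleton_small.
by exists a'; apply: a'_above.
Qed.

Lemma inj_into_seg_rat a c0 c :
  lt a c0 -> lt c0 c -> inj_into (seg lt a * rat) (nat -> seg lt c).
Proof.
move=> ac0 c0c; have ac := wo_trans lt_wo ac0 c0c.
(* [r] is coded by the indicator of [pickle r], with values [c0] and [a]. *)
pose code (p : seg lt a * rat) (j : nat) : seg lt c :=
  if j is i.+1 then if i == pickle p.2 then exist _ c0 c0c else exist _ a ac
  else exist _ (proj1_sig p.1) (wo_trans lt_wo (proj2_sig p.1) ac).
exists code => -[x r] [y s] xryx.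
have xy : x = y.
  by apply: proj1_sig_inj; have := f_equal (fun u => proj1_sig (u 0%N)) xryx.
have := f_equal (fun u => proj1_sig (u (pickle r).+1)) xryx.
rewrite /code /= eqxx; case: eqP => [/(pcan_inj (@pickleK _)) -> _ | _ /= c0a].
  by rewrite xy.
by case: (wo_irrefl lt_wo (x := c0)); rewrite {1}c0a.
Qed.

Lemma I0_below_inj_natfun a :
  inj_into {f : I0 lt | I0_below a f} (nat -> seg lt a * rat).
Proof.
exists (fun (f : {f : I0 lt | I0_below a f}) n =>
         (exist _ (proj1_sig (proj1_sig f) n).1 (proj2_sig f n),
                    (proj1_sig (proj1_sig f) n).2)) => f g fg.
apply: proj1_sig_inj; apply: proj1_sig_inj; apply: functional_extensionality => n.
case: (f_equal (fun u => u n) fg) => fg1 fg2.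
by apply: injective_projections => //; apply: (f_equal (@proj1_sig _ _) fg1).
Qed.

Lemma I0_below_card_lt a : card_lt lt {f : I0 lt | I0_below a f}.
Proof.
have [c0 ac0] := lt_unbounded a; have [c c0c] := lt_unbounded c0.
apply: card_lt_inj (I0_below_inj_natfun a) _.
apply: card_lt_inj (inj_into_natfun (inj_into_seg_rat ac0 c0c)) _.
apply: card_lt_inj (inj_into_natfun_uncurry (exist _ c0 c0c)) _.
exact: Homega.
Qed.

Lemma I0_below_representation : kappa_representation lt (@I0_below K lt).
Proof.
split; [|split; [|split]].
- move=> a b ab f fa n; exact: (wo_trans lt_wo (fa n) ab).
- move=> d [_ d_lim] f fd; have [b [bd fb]] := I0_bound_in lt_wo d_lim fd.
  by exists b.
- exact: I0_below_card_lt.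
- move=> f; have K_no_max : has_no_max lt (fun _ => True).
    by move=> x _; have [c xc] := lt_unbounded x; exists c.
  have [b [_ fb]] := I0_bound_in (f := f) lt_wo K_no_max (fun _ => I).
  by exists b.
Qed.

End Kappa.

Theorem mainTheorem9 (K : Type) (lt : K -> K -> Prop)
  (Hkappa : regular_uncountable_cardinal lt)
  (Hklk : kappa_lt_kappa lt)
  (Homega : omega_powers_small lt) :
  exists I : K -> I0 lt -> Prop,
    kappa_representation lt I /\
    forall d : K, is_limit lt d ->
    forall nu : I0 lt, ~ I d nu ->
    exists b : K, lt b d /\
      forall sigma : I0 lt, I d sigma -> I0lt nu sigma ->
      exists sigma' : I0 lt, I b sigma' /\ I0lt sigma' sigma /\ I0lt nu sigma'.
Proof.
exists (@I0_below K lt); split.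
- exact: I0_below_representation.
- move=> d d_lim nu nu_out.
  exact: (I0_below_approximation (proj1 Hkappa) d_lim nu_out).
Qed.
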